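(* (i) There is a function $\delta:\mathbb{N}\to[0,\infty)$ with $\delta(n)\to 0$ as $n\to\infty$ such that for every positive integer $n$ for which a Hadamard matrix of order $n+1$ exists, there exists a real orthogonal $n\times n$ matrix $M=(m_{i,j})$ with $(1-\delta(n))\frac{1}{\sqrt{n}}\le |m_{i,j}|\le (1+\delta(n))\frac{1}{\sqrt{n}}$ for all $i,j$ (i.e. all entries have modulus $(1+o(1))\frac{1}{\sqrt{n}}$). In particular, this is the case if $n=p^r$ where $p$ is a prime with $p\equiv 3 \pmod 4$ and $r$ is odd. (ii) If $n$ is a prime with $n\equiv 3\pmod 4$, then the matrix $M$ in (i) can be chosen to be circulant.
   Context: A Hadamard matrix of order $N$ is an $N\times N$ matrix with entries in $\{+1,-1\}$ whose rows are pairwise orthogonal. A matrix $M=(m_{i,j})_{i,j\in\mathbb{Z}_n}$ is circulant if $m_{i,j}$ depends only on $j-i \bmod n$. *)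

From HB Require Import structures.
From mathcomp Require Import all_boot all_order all_algebra.
From mathcomp Require Import all_classical all_reals all_analysis.
Set Implicit Arguments. Unset Strict Implicit. Unset Printing Implicit Defensive.
Import Order.TTheory GRing.Theory Num.Theory.
Local Open Scope ring_scope.

Definition is_hadamard (N : nat) (H : 'M[int]_N) : Prop :=
  (forall i j, H i j = 1 \/ H i j = -1) /\
  (forall i i' : 'I_N, i != i' -> \sum_(k < N) H i k * H i' k = 0).

Definition hadamard_exists (N : nat) : Prop := exists H : 'M[int]_N, is_hadamard H.

Definition orthogonal_mx (R : realType) (n : nat) (M : 'M[R]_n) : Prop :=
  M *m M^T = 1%:M.

Definition circulant (R : realType) (n : nat) (M : 'M[R]_n) : Prop :=
  forall i j i' j' : 'I_n, ((j + n - i) %% n = (j' + n - i') %% n)%N ->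
    M i j = M i' j'.

Definition entries_near (R : realType) (n : nat) (d : R) (M : 'M[R]_n) : Prop :=
  forall i j, (1 - d) / Num.sqrt (n%:R) <= `|M i j| /\
              `|M i j| <= (1 + d) / Num.sqrt (n%:R).

From HB Require Import structures.
From mathcomp Require Import all_boot all_order all_algebra all_field.
From mathcomp Require Import all_classical all_reals all_analysis.
From mathcomp Require Import ring lra zify.
Set Implicit Arguments. Unset Strict Implicit. Unset Printing Implicit Defensive.
Import Order.TTheory GRing.Theory Num.Theory.
Import numFieldNormedType.Exports.
Local Open Scope classical_set_scope.
Local Open Scope ring_scope.

(* Deleting the first row and column of a normalized Hadamard matrix of order
   n + 1 leaves a ±1 matrix C with C J = -J and C C^T = (n + 1) I - J.  With
   s = sqrt (n + 1), the matrix C / s + J / (s (s - 1)) is orthogonal, and its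
   entries 1 / (s - 1) and (2 - s) / (s (s - 1)) both have modulus
   (1 + O(1 / s)) / sqrt n.  When q = 3 mod 4 is a prime power, the Paley matrix
   (the quadratic character of y - x, with -1 on the diagonal) is such a core,
   by the Jacobsthal identity sum_x chi(x) chi(x + d) = -1 for d != 0; when q is
   prime its rows and columns are indexed by Z/q and it is circulant. *)

Section RescaledCore.
Variable R : realType.

Definition hadamard_core n (C : 'M[R]_n) : Prop :=
  [/\ forall i j, C i j = 1 \/ C i j = -1,
      forall i, \sum_k C i k = -1 &
      forall i i', \sum_k C i k * C i' k = (i == i')%:R * n.+1%:R - 1].

(* With s = sqrt (n+1), the rows of C / s have squared norm n/(n+1) and pairwise inner
   products -1/(n+1); adding 1/(s(s-1)) to every entry corrects both. *)
Definition rescale_core n (C : 'M[R]_n) : 'M[R]_n :=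
  let s := Num.sqrt n.+1%:R in \matrix_(i, j) (C i j / s + (s * (s - 1))^-1).

Definition core_delta (n : nat) : R := 2 / (Num.sqrt n.+1%:R - 1).

Lemma sqrt_nat_sqr n : Num.sqrt (n%:R : R) ^+ 2 = n%:R.
Proof. by rewrite sqr_sqrtr ?ler0n. Qed.

Lemma sqrt_nat_gt1 n : (1 < n)%N -> 1 < Num.sqrt (n%:R : R).
Proof.
by move=> n_gt1; rewrite -[X in X < _]sqrtr1 ltr_sqrt ?ltr1n // ltr0n (ltn_trans _ n_gt1).
Qed.

Lemma sum_affine_dot m (x y : 'I_m -> R) (a b : R) :
  \sum_k (x k * a + b) * (y k * a + b) =
  (\sum_k x k * y k) * a ^+ 2 + (\sum_k x k + \sum_k y k) * (a * b) + b ^+ 2 *+ m.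
Proof.
rewrite -[X in b ^+ 2 *+ X](card_ord m) -sumr_const mulrDl !mulr_suml -!big_split /=.
by apply: eq_bigr => k _; ring.
Qed.

Lemma rescale_core_orthogonal n (C : 'M[R]_n) :
  hadamard_core C -> orthogonal_mx (rescale_core C).
Proof.
case: n C => [|n] C [_ row_sum row_dot]; first by apply/matrixP => -[].
apply/matrixP => i i'; rewrite !mxE.
under eq_bigr do rewrite !mxE.
rewrite sum_affine_dot row_dot !row_sum.
have s_gt1 : 1 < Num.sqrt (n.+2%:R : R) by rewrite sqrt_nat_gt1.
have s_sqr := sqrt_nat_sqr n.+2.
move: s_gt1 s_sqr; set s := Num.sqrt _ => s_gt1 s_sqr.
have s_neq0 : s != 0 by rewrite gt_eqF // (lt_trans ltr01).
have s1_neq0 : s - 1 != 0 by rewrite subr_eq0 gt_eqF.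
rewrite -[_ *+ n.+1]mulr_natr -[n.+1%:R](addrK 1) natr1 -s_sqr.
by case: (i == i'); rewrite /= ?mul1r ?mul0r; field; rewrite s_neq0 s1_neq0.
Qed.

Lemma rescale_entry_bounds (s t : R) : 0 < t -> 1 < s -> s ^+ 2 = t ^+ 2 + 1 ->
  (1 - 2 / (s - 1)) / t <= s^-1 - (s * (s - 1))^-1 /\
  s^-1 + (s * (s - 1))^-1 <= (1 + 2 / (s - 1)) / t.
Proof.
move=> t_gt0 s_gt1 st.
have s_gt0 : 0 < s by rewrite (lt_trans ltr01).
have s1_gt0 : 0 < s - 1 by rewrite subr_gt0.
have [s_neq0 s1_neq0 t_neq0] := And3 (gt_eqF s_gt0) (gt_eqF s1_gt0) (gt_eqF t_gt0).
have den_gt0 : 0 < (s * (s - 1) * t)^-1 by rewrite invr_gt0 !mulr_gt0.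
split.
- have -> : (1 - 2 / (s - 1)) / t = (s * (s - 3)) * (s * (s - 1) * t)^-1.
    by field; rewrite s_neq0 s1_neq0 t_neq0.
  have -> : s^-1 - (s * (s - 1))^-1 = (t * (s - 2)) * (s * (s - 1) * t)^-1.
    by field; rewrite s_neq0 s1_neq0 t_neq0.
  by rewrite ler_pM2r //; nra.
- have -> : s^-1 + (s * (s - 1))^-1 = (s * t) * (s * (s - 1) * t)^-1.
    by field; rewrite s_neq0 s1_neq0 t_neq0.
  have -> : (1 + 2 / (s - 1)) / t = (s * (s + 1)) * (s * (s - 1) * t)^-1.
    by field; rewrite s_neq0 s1_neq0 t_neq0.
  by rewrite ler_pM2r //; nra.
Qed.

Lemma rescale_core_entries_near n (C : 'M[R]_n) :
  (forall i j, C i j = 1 \/ C i j = -1) -> entries_near (core_delta n) (rescale_core C).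
Proof.
case: n C => [|n] C C_sign; first by case.
move=> i j; rewrite /rescale_core /core_delta mxE.
set s := Num.sqrt n.+2%:R; set t := Num.sqrt n.+1%:R.
have t_gt0 : 0 < t by rewrite sqrtr_gt0 ltr0n.
have s_gt1 : 1 < s by rewrite sqrt_nat_gt1.
have st : s ^+ 2 = t ^+ 2 + 1 by rewrite !sqrt_nat_sqr -natr1.
(* The entry is ±1/s + b with b >= 0, so its modulus lies in [1/s - b, 1/s + b]. *)
have [lower upper] := rescale_entry_bounds t_gt0 s_gt1 st.
have b_ge0 : 0 <= (s * (s - 1))^-1.
  by rewrite invr_ge0 ltW // mulr_gt0 ?subr_gt0 // (lt_trans ltr01).
have Cs_norm : `|C i j / s| = s^-1.
  rewrite normrM normfV (gtr0_norm (lt_trans ltr01 s_gt1)).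
  by case: (C_sign i j) => ->; rewrite ?normrN normr1 mul1r.
split.
- apply: le_trans lower _; rewrite -[X in X - _ <= _]Cs_norm.
  by rewrite -[X in _ - X <= _]ger0_norm // lerB_normD.
- apply: le_trans upper; rewrite -[X in _ <= X + _]Cs_norm.
  by rewrite -[X in _ <= _ + X]ger0_norm // ler_normD.
Qed.

Lemma core_delta_ge0 n : 0 <= core_delta n.
Proof.
by rewrite /core_delta divr_ge0 // subr_ge0 -[X in X <= _]sqrtr1 ler_sqrt ?ler1n.
Qed.

Lemma core_delta_cvg : core_delta @ \oo --> (0 : R).
Proof.
apply/cvgrPdist_lt => e e_gt0; near=> n.
rewrite sub0r normrN ger0_norm ?core_delta_ge0 // /core_delta.
have K_gt0 : 0 < 1 + 2 / e by rewrite addr_gt0 ?divr_gt0.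
have K_lt_s : 1 + 2 / e < Num.sqrt n.+1%:R.
  rewrite -[X in X < _]gtr0_norm // -sqrtr_sqr ltr_sqrt ?ltr0n //.
  apply: (@le_lt_trans _ _ n%:R); last by rewrite ltr_nat.
  near: n; exact: nbhs_infty_ger.
rewrite ltr_pdivrMr ?subr_gt0 ?(lt_trans _ K_lt_s) ?ltrDl ?divr_gt0 //.
rewrite -ltr_pdivrMl // mulrC; lra.
Unshelve. all: by end_near.
Qed.

End RescaledCore.

Lemma oppr1_neq1_odd_card (F : finFieldType) : odd #|F| -> (-1 : F) != 1.
Proof.
(* In characteristic 2 the additive group of F is a 2-group. *)
apply: contraL => /eqP N1.
have char2 : (2 \in [pchar F])%N by rewrite inE /= -[2]/(1 + 1) -[X in X + _]N1 addNr.
have /p_natP[k cardF] := pprimeChar_pgroup char2.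
rewrite cardsT /= in cardF.
have card_gt1 : (1 < #|F|)%N by apply/card_gt1P; exists 0, 1; rewrite eq_sym oner_neq0.
by move: card_gt1; rewrite cardF; case: k {cardF} => // k _; rewrite expnS oddM.
Qed.

Section Paley.
Variables (R : realType) (F : finFieldType).
Hypothesis card_mod4 : (#|F| %% 4 = 3)%N.

Let odd_card : odd #|F|.
Proof. by rewrite (divn_eq #|F| 4) card_mod4 addnC oddD oddM andbF. Qed.

Let oppr1_neq1 : (-1 : F) != 1.
Proof. exact: oppr1_neq1_odd_card. Qed.

Definition euler_exp : nat := (#|F|.-1)./2.

Lemma euler_exp_double : (euler_exp.*2 = #|F|.-1)%N.
Proof.
rewrite /euler_exp; case: #|F| odd_card => //= k /negPf k_even.
by rewrite -[in RHS](odd_double_half k) k_even.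
Qed.

Lemma odd_euler_exp : odd euler_exp.
Proof.
rewrite /euler_exp (divn_eq #|F| 4) card_mod4; set k := (#|F| %/ 4)%N.
rewrite (_ : (k * 4 + 3).-1 = (k * 2 + 1).*2)%N; last by rewrite -mul2n; lia.
by rewrite doubleK addn1 /= oddM andbF.
Qed.

(* The quadratic character, by Euler's criterion. *)
Definition qchar (x : F) : R :=
  if x == 0 then 0 else if x ^+ euler_exp == 1 then 1 else -1.

Lemma expr_euler_exp_sign (x : F) : x != 0 -> x ^+ euler_exp = 1 \/ x ^+ euler_exp = -1.
Proof.
move=> x_neq0.
have x_order : x ^+ #|F|.-1 = 1.
  apply: (mulfI x_neq0); rewrite mulr1 -exprS prednK ?expf_card //.
  by apply/card_gt0P; exists 0.
have : (x ^+ euler_exp) ^+ 2 == 1 by rewrite -exprM muln2 euler_exp_double x_order.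
by rewrite sqrf_eq1 => /orP[] /eqP; [left | right].
Qed.

Lemma qchar_nz (x : F) : x != 0 ->
  (x ^+ euler_exp = 1 /\ qchar x = 1) \/ (x ^+ euler_exp = -1 /\ qchar x = -1).
Proof.
move=> x_neq0; rewrite /qchar (negPf x_neq0).
by case: (expr_euler_exp_sign x_neq0) => ->; [left | right]; rewrite ?eqxx ?(negPf oppr1_neq1).
Qed.

Lemma qchar0 : qchar 0 = 0.
Proof. by rewrite /qchar eqxx. Qed.

Lemma qchar1 : qchar 1 = 1.
Proof. by rewrite /qchar oner_eq0 expr1n eqxx. Qed.

Lemma qcharN1 : qchar (-1) = -1.
Proof.
by rewrite /qchar oppr_eq0 oner_eq0 -signr_odd odd_euler_exp expr1 (negPf oppr1_neq1).
Qed.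

Lemma qcharM (x y : F) : qchar (x * y) = qchar x * qchar y.
Proof.
have [->|x_neq0] := eqVneq x 0; first by rewrite mul0r qchar0 mul0r.
have [->|y_neq0] := eqVneq y 0; first by rewrite mulr0 qchar0 mulr0.
have xy_neq0 : x * y != 0 by rewrite mulf_neq0.
case: (qchar_nz x_neq0) (qchar_nz y_neq0) => -[ex ->] [[ey ->] | [ey ->]];
  rewrite /qchar (negPf xy_neq0) exprMn ex ey ?mulN1r ?mulrN1 ?mulr1 ?opprK ?eqxx //;
  by rewrite (negPf oppr1_neq1).
Qed.

Lemma qcharN (x : F) : qchar (- x) = - qchar x.
Proof. by rewrite -mulN1r qcharM qcharN1 mulN1r. Qed.

Lemma qchar_sqr (x : F) : x != 0 -> qchar x * qchar x = 1.
Proof. by move=> /qchar_nz[] [_ ->]; rewrite ?mulrNN mulr1. Qed.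

(* -1 is a non-square, so x |-> -x swaps squares and non-squares. *)
Lemma sum_qchar : \sum_x qchar x = 0.
Proof.
have sum_opp : \sum_x qchar x = - \sum_x qchar x.
  rewrite {1}(reindex_inj (@oppr_inj F)) /= -sumrN.
  by apply: eq_bigr => x _; rewrite qcharN.
have : 2 * \sum_x qchar x = 0 by rewrite mulr2n mulrDl mul1r {1}sum_opp addNr.
by move/eqP; rewrite mulf_eq0 pnatr_eq0 => /eqP.
Qed.

(* For x != 0, qchar x * qchar (x + d) = qchar (1 + d / x); as d / 0 = 0,
   x |-> 1 + d / x permutes F, so only the x = 0 term differs from sum_qchar. *)
Lemma sum_qchar_shift (d : F) : d != 0 -> \sum_x qchar x * qchar (x + d) = -1.
Proof.
move=> d_neq0.
have termE x : qchar x * qchar (x + d) = qchar (1 + d / x) - (x == 0)%:R.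
  have [->|x_neq0] := eqVneq x 0.
    by rewrite qchar0 mul0r invr0 mulr0 addr0 qchar1 subrr.
  rewrite subr0 (_ : x + d = x * (1 + d / x)); last by field.
  by rewrite qcharM mulrA qchar_sqr // mul1r.
under eq_bigr do rewrite termE.
have shift_inj : injective (fun x : F => 1 + d / x).
  by move=> x y /= /addrI /(mulfI d_neq0) /invr_inj.
rewrite sumrB; have := sum_qchar; rewrite (reindex_inj shift_inj) /= => ->.
by rewrite sub0r (bigD1 0) //= eqxx big1 ?addr0 // => x /negPf ->.
Qed.

Definition paley_sign (z : F) : R := if z == 0 then -1 else qchar z.

Lemma paley_sign_pm (z : F) : paley_sign z = 1 \/ paley_sign z = -1.
Proof.
rewrite /paley_sign; have [//|z_neq0] := eqVneq z 0; first by right.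
by case: (qchar_nz z_neq0) => -[_ ->]; [left | right].
Qed.

Lemma paley_sign_sqr (z : F) : paley_sign z * paley_sign z = 1.
Proof. by case: (paley_sign_pm z) => ->; rewrite ?mulrNN mulr1. Qed.

Lemma sum_paley_sign : \sum_z paley_sign z = -1.
Proof.
have := sum_qchar; rewrite (bigD1 0) //= qchar0 add0r => sum_qchar_nz.
rewrite (bigD1 0) //= {1}/paley_sign eqxx -[RHS]addr0; congr (_ + _).
rewrite -[RHS]sum_qchar_nz.
by apply: eq_bigr => z /negPf z_neq0; rewrite /paley_sign z_neq0.
Qed.

Lemma sum_paley_sign_shift (d : F) : d != 0 ->
  \sum_x paley_sign x * paley_sign (x + d) = -1.
Proof.
move=> d_neq0.
have termE x : paley_sign x * paley_sign (x + d) =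
    qchar x * qchar (x + d) - (x == 0)%:R * qchar d - (x == - d)%:R * qchar (- d).
  rewrite /paley_sign; have [->|x_neq0] := eqVneq x 0.
    rewrite add0r (negPf d_neq0) qchar0 mul0r eq_sym oppr_eq0 (negPf d_neq0).
    by rewrite !mul0r mul1r; lra.
  have [->|x_neq_d] := eqVneq x (- d).
    by rewrite addNr eqxx qchar0 mulr0 /= mul0r mul1r; lra.
  have xd_neq0 : x + d != 0 by rewrite addr_eq0.
  by rewrite (negPf xd_neq0) /= !mul0r !subr0.
under eq_bigr do rewrite termE.
have sum_ind (a : F) (K : R) : \sum_x (x == a)%:R * K = K.
  by rewrite (bigD1 a) //= eqxx mul1r big1 ?addr0 // => x /negPf ->; rewrite mul0r.
by rewrite !sumrB sum_qchar_shift // !sum_ind qcharN; lra.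
Qed.

Lemma paley_sign_dot (u v : F) :
  \sum_y paley_sign (y - u) * paley_sign (y - v) = (u == v)%:R * #|F|.+1%:R - 1.
Proof.
rewrite (reindex_inj (addIr u)) /=.
under eq_bigr => x _ do rewrite addrK -addrA.
have [->|u_neq_v] := eqVneq u v.
  under eq_bigr do rewrite subrr addr0 paley_sign_sqr.
  by rewrite sumr_const /= mul1r -natr1 addrK.
by rewrite sum_paley_sign_shift ?subr_eq0 // mul0r sub0r.
Qed.

End Paley.

Section Cores.
Variable R : realType.

Lemma sign_mul (x y : R) : x = 1 \/ x = -1 -> y = 1 \/ y = -1 -> x * y = 1 \/ x * y = -1.
Proof. by case=> ->; case=> ->; rewrite ?mulr1 ?mulrN1 ?opprK; auto. Qed.

Lemma sign_sqr (x : R) : x = 1 \/ x = -1 -> x * x = 1.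
Proof. by case=> ->; rewrite ?mulrNN mulr1. Qed.

(* Multiplying each row and each column by the sign of its first entry makes the
   first row and column all ones; the rest is the core. *)
Definition normalized_core N (H : 'M[R]_N.+1) : 'M[R]_N :=
  \matrix_(i, j) (H (lift 0 i) 0 * H (lift 0 i) (lift 0 j) * H 0 (lift 0 j) * H 0 0).

Lemma normalized_core_hadamard N (H : 'M[R]_N.+1) :
  (forall i j, H i j = 1 \/ H i j = -1) ->
  (forall i i', i != i' -> \sum_k H i k * H i' k = 0) ->
  hadamard_core (normalized_core H).
Proof.
move=> H_sign H_orth.
pose E u k := H u 0 * H u k * H 0 k * H 0 0.
have H_sqr i j : H i j * H i j = 1 by rewrite sign_sqr.
have E_sign u k : E u k = 1 \/ E u k = -1 by rewrite /E /=; repeat apply: sign_mul; apply: H_sign.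
have E_row0 k : E 0 k = 1.
  by rewrite /E /= -(mulrA (H 0 0)) H_sqr mulr1 H_sqr.
have E_col0 u : E u 0 = 1 by rewrite /E /= !H_sqr mul1r.
have E_dot u u' : \sum_k E u k * E u' k = (u == u')%:R * N.+1%:R.
  have termE k : E u k * E u' k = H u 0 * H u' 0 * (H u k * H u' k).
    by rewrite -[RHS]mulr1 -(H_sqr 0 k) -[RHS]mulr1 -(H_sqr 0 0) /E; ring.
  under eq_bigr do rewrite termE.
  rewrite -mulr_sumr; have [<-|u_neq_u'] := eqVneq u u'; last by rewrite H_orth // mulr0 /= mul0r.
  under eq_bigr do rewrite H_sqr.
  by rewrite H_sqr sumr_const card_ord mul1r.
split=> [i j | i | i i']; rewrite ?mxE.
- exact: E_sign.
- have := E_dot (lift 0 i) 0; rewrite eq_sym (negPf (neq_lift _ _)) mul0r.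
  rewrite big_ord_recl E_col0 E_row0 mulr1 => /eqP; rewrite addrC addr_eq0 => /eqP <-.
  by apply: eq_bigr => k _; rewrite mxE E_row0 mulr1.
- have := E_dot (lift 0 i) (lift 0 i'); rewrite big_ord_recl !E_col0 mulr1 (inj_eq lift_inj).
  by move=> <-; rewrite (addrC 1) addrK; apply: eq_bigr => k _; rewrite !mxE.
Qed.

Lemma is_hadamard_intr N (H : 'M[int]_N) (H' := map_mx intr H : 'M[R]_N) :
  is_hadamard H ->
  (forall i j, H' i j = 1 \/ H' i j = -1) /\
  (forall i i', i != i' -> \sum_k H' i k * H' i' k = 0).
Proof.
move=> [H_sign H_orth]; split=> [i j | i i' neq_ii']; rewrite /H'.
  by rewrite mxE; case: (H_sign i j) => ->; [left | right].
under eq_bigr do rewrite !mxE -intrM.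
by rewrite -rmorph_sum /= H_orth.
Qed.

Definition paley_core (F : finFieldType) n (g : 'I_n -> F) : 'M[R]_n :=
  \matrix_(i, j) paley_sign R (g j - g i).

Lemma paley_core_hadamard (F : finFieldType) n (g : 'I_n -> F) :
  (#|F| %% 4 = 3)%N -> bijective g -> hadamard_core (paley_core g).
Proof.
move=> card_mod4 g_bij.
have sum_g (G : F -> R) : \sum_k G (g k) = \sum_y G y.
  by rewrite (reindex g) //; exact: onW_bij.
split=> [i j | i | i i']; rewrite ?mxE.
- exact: paley_sign_pm.
- under eq_bigr do rewrite mxE.
  rewrite (sum_g (fun y => paley_sign R (y - g i))) (reindex_inj (addIr (g i))) /=.
  under eq_bigr do rewrite addrK.
  exact: sum_paley_sign.
- under eq_bigr do rewrite !mxE.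
  rewrite (sum_g (fun y => paley_sign R (y - g i) * paley_sign R (y - g i'))).
  by rewrite paley_sign_dot // -(bij_eq_card g_bij) card_ord (inj_eq (bij_inj g_bij)).
Qed.

Lemma rescale_core_circulant n (C : 'M[R]_n) : circulant C -> circulant (rescale_core C).
Proof. by move=> C_circ i j i' j' ij; rewrite !mxE (C_circ _ _ _ _ ij). Qed.

Lemma paley_core_circulant p :
  prime p -> circulant (paley_core (fun i : 'I_p => (i : nat)%:R : 'F_p)).
Proof.
move=> p_prime i j i' j' ij; rewrite !mxE; congr (paley_sign _ _).
have diffE (a b : 'I_p) : (b%:R - a%:R : 'F_p) = ((b + p - a) %% p)%:R.
  rewrite Fp_nat_mod // natrB; last by rewrite (leq_trans (ltnW (ltn_ord a))) ?leq_addl.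
  by rewrite natrD -(Fp_nat_mod p_prime p) modnn addr0.
by rewrite !diffE ij.
Qed.

End Cores.

Lemma nat_Fp_bij p : prime p -> bijective (fun i : 'I_p => (i : nat)%:R : 'F_p).
Proof.
move=> p_prime; apply: inj_card_bij; last by rewrite card_Fp ?card_ord.
move=> i j /(congr1 (fun x : 'F_p => x : nat)).
by rewrite !val_Fp_nat // !modn_small //; exact: val_inj.
Qed.

Lemma expn_mod4_odd p r : (p %% 4 = 3)%N -> odd r -> (p ^ r %% 4 = 3)%N.
Proof.
move=> p_mod4 r_odd; rewrite -modnXm p_mod4 -(odd_double_half r) r_odd.
by rewrite add1n expnS -mul2n expnM -modnMm -modnXm /= exp1n.
Qed.

Theorem proposition3p1 (R : realType) :
  exists delta : nat -> R,
    (forall n, 0 <= delta n) /\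
    (delta @ \oo --> (0 : R)) /\
    (* (i) *)
    (forall n : nat, (0 < n)%N -> hadamard_exists n.+1 ->
       exists M : 'M[R]_n, orthogonal_mx M /\ entries_near (delta n) M) /\
    (* (i), in particular *)
    (forall p r : nat, prime p -> (p %% 4 = 3)%N -> odd r ->
       exists M : 'M[R]_(p ^ r)%N, orthogonal_mx M /\ entries_near (delta (p ^ r)%N) M) /\
    (* (ii) *)
    (forall n : nat, prime n -> (n %% 4 = 3)%N ->
       exists M : 'M[R]_n, orthogonal_mx M /\ entries_near (delta n) M /\ circulant M).
Proof.
exists (core_delta R); split; first exact: core_delta_ge0.
split; first exact: core_delta_cvg.
have from_core n (C : 'M[R]_n) : hadamard_core C ->
    exists M : 'M[R]_n, orthogonal_mx M /\ entries_near (core_delta R n) M.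
  move=> C_core; exists (rescale_core C); split; first exact: rescale_core_orthogonal.
  by apply: rescale_core_entries_near; case: C_core.
split.
  move=> n _ [H /(is_hadamard_intr R)[H_sign H_orth]].
  exact: from_core (normalized_core_hadamard H_sign H_orth).
split.
  move=> p r p_prime p_mod4 r_odd.
  have [F _ cardF] := pPrimePowerField p_prime (odd_gt0 r_odd).
  pose g (i : 'I_(p ^ r)) : F := enum_val (cast_ord (esym cardF) i).
  apply: from_core (paley_core R g) (paley_core_hadamard _ _ _).
    by rewrite cardF expn_mod4_odd.
  apply: (bij_comp (enum_val_bij _)).
  by exists (cast_ord cardF) => x; rewrite ?cast_ordK ?cast_ordKV.
move=> p p_prime p_mod4.
pose C := paley_core R (fun i : 'I_p => (i : nat)%:R : 'F_p).
have C_core : hadamard_core C.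
  by apply: paley_core_hadamard (nat_Fp_bij p_prime); rewrite card_Fp.
exists (rescale_core C); split; first exact: rescale_core_orthogonal.
split; first by apply: rescale_core_entries_near; case: C_core.
exact/rescale_core_circulant/paley_core_circulant.
Qed.
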